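(* Let $N=(S,T,F,M_0,\ell)$ be a structural conflict net. If there are $\sigma\in\mathrm{Act}^*$ and $a,b,c\in\mathrm{Act}$ with $a\ne c$ such that $\langle\sigma,\{\{a,c\}\}\rangle\notin\mathcal F(N)$, $\langle\sigma,\{\{b\}\}\rangle\notin\mathcal F(N)$ and $\langle\sigma,\{\{a,b\},\{b,c\}\}\rangle\in\mathcal F(N)$, then $N$ has a fully reachable pure $\mathsf M$.
   Context: Fix visible actions $\mathrm{Act}$ and $\tau\notin\mathrm{Act}$. A Petri net has disjoint $S,T$, $F:(S\times T)\cup(T\times S)\to\mathbb N$, $M_0\in\mathbb N^S$, $\ell:T\to\mathrm{Act}\cup\{\tau\}$. ${}^\bullet x(y)=F(y,x)$, $x^\bullet(y)=F(x,y)$, extended additively; multiset $\le,\cap,\cup$ pointwise $\le$, min, max. For finite nonempty multiset $G$ of transitions, $M[G\rangle M'$ iff ${}^\bullet G\le M$ and $M'=M-{}^\bullet G+G^\bullet$; reachable markings as usual; $t\smile u$ iff $M[\{t\}+\{u\}\rangle$ for some reachable $M$. Structural conflict net: $t\smile u\Rightarrow{}^\bullet t\cap{}^\bullet u=\emptyset$. Fully reachable pure $\mathsf M$: $t,u,v\in T$ with ${}^\bullet t\cap{}^\bullet u\ne\emptyset$, ${}^\bullet u\cap{}^\bullet v\ne\emptyset$, ${}^\bullet t\cap{}^\bullet v=\emptyset$ and a reachable $M$ with ${}^\bullet t\cup{}^\bullet u\cup{}^\bullet v\le M$. $M\xrightarrow{\alpha}M'$ iff $M[t\rangle M'$ with $\ell(t)=\alpha$;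 $\Rightarrow$ reflexive transitive closure of $\xrightarrow{\tau}$; $M\overset{a_1\cdots a_n}{\Longrightarrow}M'$ iff $M\Rightarrow\xrightarrow{a_1}\Rightarrow\cdots\xrightarrow{a_n}\Rightarrow M'$. For a step $A$ (finite nonempty multiset over $\mathrm{Act}$), $M\xrightarrow{A}$ iff $M[G\rangle$ for a finite multiset $G$ of transitions, none labelled $\tau$, with label multiset $A$. $\mathcal F(N)$ consists of all $\langle\sigma,X\rangle$, $\sigma\in\mathrm{Act}^*$, $X$ a finite set of steps, such that some $M$ has $M_0\overset{\sigma}{\Longrightarrow}M$, $M\not\xrightarrow{\tau}$ and $M\not\xrightarrow{A}$ for all $A\in X$. *)

From Stdlib Require Import List Permutation Relations Arith.
Import ListNotations.

Record net (S T Act : Type) := Net {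
  pre  : T -> S -> nat;          (* pre t s  = F(s,t) = (•t)(s) *)
  post : T -> S -> nat;          (* post t s = F(t,s) = (t•)(s) *)
  M0   : S -> nat;
  lab  : T -> option Act         (* None = tau *)
}.
Arguments Net {S T Act}.
Arguments pre {S T Act}.
Arguments post {S T Act}.
Arguments M0 {S T Act}.
Arguments lab {S T Act}.

Section Nets.
Context {S T Act : Type} (N : net S T Act).

Definition marking := S -> nat.

(* A finite multiset G of transitions is given by a list (order irrelevant). *)
Definition preG (G : list T) (s : S) : nat :=
  fold_right (fun t n => pre N t s + n) 0 G.
Definition postG (G : list T) (s : S) : nat :=
  fold_right (fun t n => post N t s + n) 0 G.

Definition enabled (M : marking) (G : list T) : Prop :=
  G <> [] /\ forall s, preG G s <= M s.

Definition fires (M : marking) (G : list T) (M' : marking) : Prop :=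
  enabled M G /\ forall s, M' s = M s - preG G s + postG G s.

Inductive reachable : marking -> Prop :=
| reach_init : reachable (M0 N)
| reach_step : forall M t M', reachable M -> fires M [t] M' -> reachable M'.

Definition concurrent (t u : T) : Prop :=
  exists M, reachable M /\ enabled M [t; u].

Definition structural_conflict_net : Prop :=
  forall t u, concurrent t u -> forall s, Nat.min (pre N t s) (pre N u s) = 0.

Definition lstep (alpha : option Act) (M M' : marking) : Prop :=
  exists t, lab N t = alpha /\ fires M [t] M'.

Definition tau_star : relation marking := clos_refl_trans marking (lstep None).

Fixpoint weak (M : marking) (sigma : list Act) (M' : marking) : Prop :=
  match sigma with
  | [] => tau_star M M'
  | a :: sigma' => exists M1 M2, tau_star M M1 /\ lstep (Some a) M1 M2 /\ weak M2 sigma' M'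
  end.

(* M --A--> for a step A (finite nonempty multiset over Act, given as a list) *)
Definition can_step (M : marking) (A : list Act) : Prop :=
  exists G : list T,
    Forall (fun t => lab N t <> None) G /\
    Permutation (map (lab N) G) (map Some A) /\
    enabled M G.

(* <sigma, X> \in F(N); X a finite set of steps given as a list of lists *)
Definition failure (sigma : list Act) (X : list (list Act)) : Prop :=
  exists M, weak (M0 N) sigma M /\
    (~ exists M', lstep None M M') /\
    (forall A, In A X -> ~ can_step M A).

Definition fully_reachable_pure_M : Prop :=
  exists t u v : T,
    (exists s, Nat.min (pre N t s) (pre N u s) <> 0) /\
    (exists s, Nat.min (pre N u s) (pre N v s) <> 0) /\
    (forall s, Nat.min (pre N t s) (pre N v s) = 0) /\
    (exists M, reachable M /\
       forall s, Nat.max (Nat.max (pre N t s) (pre N u s)) (pre N v s) <= M s).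

End Nets.

(* After sigma the net can reach a stable marking M refusing both {a,b} and {b,c}; as
   the failures <sigma,{{a,c}}> and <sigma,{{b}}> are impossible, M enables a b-labelled
   transition u and a step of an a-labelled t and a c-labelled v.  Transitions with
   disjoint presets that are each enabled are enabled together, so u must share a
   preplace with t and with v; t and v are concurrent at the reachable M, so the
   structural conflict property makes their presets disjoint. *)
From Stdlib Require Import List Permutation Lia Classical.
Import ListNotations.

Section Steps.
Context {S T Act : Type} (N : net S T Act).

Lemma tau_star_reachable M M' : tau_star N M M' -> reachable N M -> reachable N M'.
Proof.
  induction 1 as [M M' [t [_ Hfire]]| |]; auto.
  intro HM; exact (reach_step N M t M' HM Hfire).
Qed.

Lemma weak_reachable sigma : forall M M',
  weak N M sigma M' -> reachable N M -> reachable N M'.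
Proof.
  induction sigma as [|a sigma IH]; simpl; intros M M' Hweak HM.
  - exact (tau_star_reachable M M' Hweak HM).
  - destruct Hweak as [M1 [M2 [Htau [[t [_ Hfire]] Hweak]]]].
    apply (IH M2); auto.
    apply (reach_step N M1 t M2); auto.
    exact (tau_star_reachable M M1 Htau HM).
Qed.

Lemma can_step_of_not_failure sigma M A :
  weak N (M0 N) sigma M -> ~ (exists M', lstep N None M M') ->
  ~ failure N sigma [A] -> can_step N M A.
Proof.
  intros Hweak Hstable Hnot.
  apply NNPP; intro Hrefuse; apply Hnot.
  exists M; repeat split; auto.
  intros A' [<-|[]]; exact Hrefuse.
Qed.

Lemma can_step_single M b :
  can_step N M [b] -> exists u, lab N u = Some b /\ forall s, pre N u s <= M s.
Proof.
  intros [G [_ [Hperm [_ Hle]]]].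
  apply Permutation_sym, Permutation_length_1_inv in Hperm.
  destruct G as [|u [|u' G]]; try discriminate.
  injection Hperm as Hu.
  exists u; split; auto.
  intro s; specialize (Hle s); simpl in Hle; lia.
Qed.

Lemma can_step_pair M a c :
  can_step N M [a; c] -> exists t v, lab N t = Some a /\ lab N v = Some c /\
    forall s, preG N [t; v] s <= M s.
Proof.
  intros [G [_ [Hperm [_ Hle]]]].
  apply Permutation_sym, Permutation_length_2_inv in Hperm.
  destruct G as [|x [|y [|z G]]]; try (destruct Hperm; discriminate).
  destruct Hperm as [Hperm|Hperm]; injection Hperm as Hx Hy.
  - exists x, y; auto.
  - exists y, x; repeat split; auto.
    intro s; specialize (Hle s); simpl in *; lia.
Qed.

Lemma can_step_pair_of_disjoint_pre M t u a b :
  lab N t = Some a -> lab N u = Some b ->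
  (forall s, Nat.min (pre N t s) (pre N u s) = 0) ->
  (forall s, pre N t s <= M s) -> (forall s, pre N u s <= M s) ->
  can_step N M [a; b].
Proof.
  intros Ht Hu Hdisj HtM HuM.
  exists [t; u]; repeat split.
  - repeat constructor; congruence.
  - simpl; rewrite Ht, Hu; apply Permutation_refl.
  - discriminate.
  - intro s; specialize (Hdisj s); specialize (HtM s); specialize (HuM s); simpl; lia.
Qed.

Lemma shared_pre_of_refused_pair M t u a b :
  lab N t = Some a -> lab N u = Some b ->
  (forall s, pre N t s <= M s) -> (forall s, pre N u s <= M s) ->
  ~ can_step N M [a; b] -> exists s, Nat.min (pre N t s) (pre N u s) <> 0.
Proof.
  intros Ht Hu HtM HuM Hrefuse.
  apply NNPP; intro Hdisj; apply Hrefuse.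
  apply (can_step_pair_of_disjoint_pre M t u); auto.
  intro s; apply NNPP; intro; eauto.
Qed.

End Steps.

Theorem lemma5p5 (S T Act : Type) (N : net S T Act)
  (sigma : list Act) (a b c : Act) :
  structural_conflict_net N ->
  a <> c ->
  ~ failure N sigma [[a; c]] ->
  ~ failure N sigma [[b]] ->
  failure N sigma [[a; b]; [b; c]] ->
  fully_reachable_pure_M N.
Proof.
  intros Hscn _ Hnot_ac Hnot_b [M [Hweak [Hstable Hrefuse]]].
  assert (HM : reachable N M) by exact (weak_reachable N sigma _ M Hweak (reach_init N)).
  destruct (can_step_single N M b (can_step_of_not_failure N sigma M _ Hweak Hstable Hnot_b))
    as [u [Hu HuM]].
  destruct (can_step_pair N M a c (can_step_of_not_failure N sigma M _ Hweak Hstable Hnot_ac))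
    as [t [v [Ht [Hv Htv]]]].
  assert (HtM : forall s, pre N t s <= M s) by (intro s; specialize (Htv s); simpl in Htv; lia).
  assert (HvM : forall s, pre N v s <= M s) by (intro s; specialize (Htv s); simpl in Htv; lia).
  exists t, u, v; repeat split.
  - apply (shared_pre_of_refused_pair N M t u a b); auto.
    apply Hrefuse; simpl; auto.
  - apply (shared_pre_of_refused_pair N M u v b c); auto.
    apply Hrefuse; simpl; auto.
  - apply Hscn; exists M; split; [exact HM | split; [discriminate | exact Htv]].
  - exists M; split; [exact HM|].
    intro s; specialize (HtM s); specialize (HuM s); specialize (HvM s); lia.
Qed.
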